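(* Let $\mathcal R=(\mathbf N,G,\mathcal P)$ be a max game and let $\mathbf p$ be a routing. If a greedy move by some player $i$ takes $\mathbf p$ to a routing $\mathbf p'$, then $\mathbf p'<\mathbf p$ in the order defined below (i.e. $M(\mathbf p')<M(\mathbf p)$).
   Context: A routing game is a tuple $\mathcal R=(\mathbf N,G,\mathcal P)$: players $\mathbf N=\{1,\dots,N\}$ ($N\ge1$), a graph $G=(V,E)$ with $n=|V|$ nodes, and for each player $i$ a nonempty finite set $\mathcal P_i$ of paths in $G$ from a source $u_i$ to a destination $v_i$; $\mathcal P=\bigcup_i\mathcal P_i$. A routing is $\mathbf p=[p_1,\dots,p_N]$ with $p_i\in\mathcal P_i$; $(p_i';\mathbf p_{-i})$ denotes the routing obtained by replacing $p_i$ with $p_i'$. For an edge $e$, $C_e(\mathbf p)$ is the number of players $j$ with $e\in p_j$; $C_i(\mathbf p)=\max_{e\in p_i}C_e(\mathbf p)$; $D_i(\mathbf p)=|p_i|$ (number of edges); $C(\mathbf p)=\max_{e\in E}C_e(\mathbf p)$; $D(\mathbf p)=\max_i|p_i|$; $L=\max_{p\in\mathcal P}|p|$. A max game is a routing game with player cost $pc_i(\mathbf p)=\max(C_i(\mathbf p),D_i(\mathbf p))$ and social cost $SC(\mathbf p)=\max(C(\mathbf p),D(\mathbf p))$. A greedy move by player $i$ takes $\mathbf p$ to $\mathbf p'=(p_i';\mathbf p_{-i})$ for some $p_i'\in\mathcal P_i$ with $pc_i(\mathbf p')<pc_i(\mathbf p)$. Order: let $r=\max(N,L)$; the routing vector is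 $M(\mathbf p)=[m_1(\mathbf p),\dots,m_r(\mathbf p)]$ with $m_k(\mathbf p)=a_k(\mathbf p)+b_k(\mathbf p)$, where $a_k(\mathbf p)$ is the number of players $j$ with $C_j(\mathbf p)=k$ and $b_k(\mathbf p)$ is the number of players $j$ with $D_j(\mathbf p)=k$. Write $M(\mathbf p')<M(\mathbf p)$ (and $\mathbf p'<\mathbf p$) if there is $j\in\{1,\dots,r\}$ with $m_k(\mathbf p')=m_k(\mathbf p)$ for all $k>j$ and $m_j(\mathbf p')<m_j(\mathbf p)$. *)

From mathcomp Require Import all_boot.
Set Implicit Arguments. Unset Strict Implicit. Unset Printing Implicit Defensive.

Definition simple_graph (V : finType) (adj : rel V) : Prop :=
  symmetric adj /\ irreflexive adj.

Definition is_path (V : finType) (adj : rel V) (u v : V) (s : seq V) : bool :=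
  if s is x :: t then [&& x == u, path adj x t, last x t == v & uniq s]
  else false.

Definition edges_of (V : finType) (s : seq V) : seq {set V} :=
  [seq [set x.1; x.2] | x <- zip s (behead s)].

Definition plen (V : finType) (s : seq V) : nat := size (edges_of s).

Section Game.
Variables (V : finType) (N : nat).

Definition routing := 'I_N -> seq V.

Definition Ce (p : routing) (e : {set V}) : nat :=
  #|[set j : 'I_N | e \in edges_of (p j)]|.

Definition Ci (p : routing) (i : 'I_N) : nat :=
  \max_(e <- edges_of (p i)) Ce p e.

Definition Di (p : routing) (i : 'I_N) : nat := plen (p i).

Definition pc (p : routing) (i : 'I_N) : nat := maxn (Ci p i) (Di p i).

Definition replace (p : routing) (i : 'I_N) (q : seq V) : routing :=
  fun j => if j == i then q else p j.

Definition Lmax (P : 'I_N -> seq (seq V)) : nat :=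
  \max_(i < N) \max_(q <- P i) plen q.

Definition rbound (P : 'I_N -> seq (seq V)) : nat := maxn N (Lmax P).

Definition ak (p : routing) (k : nat) : nat := #|[set j : 'I_N | Ci p j == k]|.
Definition bk (p : routing) (k : nat) : nat := #|[set j : 'I_N | Di p j == k]|.
Definition mk (p : routing) (k : nat) : nat := ak p k + bk p k.

Definition routing_lt (P : 'I_N -> seq (seq V)) (p' p : routing) : Prop :=
  exists j : nat, [/\ 1 <= j <= rbound P,
    (forall k, j < k <= rbound P -> mk p' k = mk p k) &
    mk p' j < mk p j].

End Game.

From mathcomp Require Import all_boot.
Set Implicit Arguments. Unset Strict Implicit. Unset Printing Implicit Defensive.

(* Let p' agree with p except for player i, and write c = pc p i and
   c' = pc p' i.  Since only player i changed path, an edge whose congestion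
   under p' exceeds C_i(p') is not on p'_i, so its congestion did not grow;
   hence for every threshold t > C_i(p') and every player j,
   t <= C_j(p') implies t <= C_j(p).  By symmetry the converse holds for
   t > C_i(p), so above max(c, c') the levels of the C_j agree, and so do
   those of the D_j (which only differ at player i, whose lengths are at most
   c and c').  Consequently m_k(p') = m_k(p) for k > max(c, c').

   For a greedy move c' < c.  At level c every player counted by m_c(p') is
   also counted by m_c(p) and is different from i, while i itself is counted
   by m_c(p) (as C_i(p) = c or D_i(p) = c).  Hence m_c(p') < m_c(p), and c
   is a valid witness index because c <= max(N, L).  Only the congestion
   counts matter. *)

Lemma bigmax_seq_witness {T : eqType} {s : seq T} {F : T -> nat} {t : nat} :
  0 < t -> t <= \max_(e <- s) F e -> exists2 e, e \in s & t <= F e.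
Proof.
move=> t_gt0; elim: s => [|x s IHs]; first by rewrite big_nil leqNgt t_gt0.
rewrite big_cons leq_max => /orP [le_t_Fx | /IHs [e e_s le_t_Fe]].
  by exists x; rewrite ?mem_head.
by exists e; rewrite // in_cons e_s orbT.
Qed.

Section Deviation.
Variables (V : finType) (N : nat).
Implicit Types (p : routing V N) (i j : 'I_N) (e : {set V}).

Lemma Ce_le_Ci p j e : e \in edges_of (p j) -> Ce p e <= Ci p j.
Proof. by move=> e_j; apply: (leq_bigmax_seq (F := Ce p)). Qed.

Definition deviates p' p i := forall j, j != i -> p' j = p j.

Lemma deviates_sym p p' i : deviates p' p i -> deviates p p' i.
Proof. by move=> dev j /dev ->. Qed.

Lemma replace_deviates p i q : deviates (replace p i q) p i.
Proof. by move=> j /negbTE ji; rewrite /replace ji. Qed.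

Lemma Ce_dev_le p' p i e :
  deviates p' p i -> e \notin edges_of (p' i) -> Ce p' e <= Ce p e.
Proof.
move=> dev e_new; apply/subset_leq_card/subsetP => j; rewrite !inE.
by case: (eqVneq j i) => [->|/dev ->]; first by rewrite (negbTE e_new).
Qed.

Lemma Ci_dev_above p' p i j t :
  deviates p' p i -> Ci p' i < t -> t <= Ci p' j -> t <= Ci p j.
Proof.
move=> dev lt_Ci_t le_t_Cj.
have t_gt0 : 0 < t := leq_ltn_trans (leq0n _) lt_Ci_t.
have [e e_j le_t_Ce] := bigmax_seq_witness (F := Ce p') t_gt0 le_t_Cj.
have e_new : e \notin edges_of (p' i).
  apply/negP => /Ce_le_Ci le_Ce_Ci.
  by move: (leq_trans le_t_Ce le_Ce_Ci); rewrite leqNgt lt_Ci_t.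
apply: leq_trans (leq_trans le_t_Ce (Ce_dev_le dev e_new)) _.
case: (eqVneq j i) => [eq_ji | /dev eq_pj]; first by rewrite -eq_ji e_j in e_new.
by apply: Ce_le_Ci; rewrite -eq_pj.
Qed.

Lemma Ci_dev_threshold p' p i j t :
  deviates p' p i -> maxn (Ci p i) (Ci p' i) < t ->
  (t <= Ci p' j) = (t <= Ci p j).
Proof.
rewrite gtn_max => dev /andP [lt_Ci_t lt_Ci'_t]; apply/idP/idP.
  exact: Ci_dev_above dev lt_Ci'_t.
exact: Ci_dev_above (deviates_sym dev) lt_Ci_t.
Qed.

Lemma mk_dev_above p' p i k :
  deviates p' p i -> maxn (pc p i) (pc p' i) < k -> mk p' k = mk p k.
Proof.
rewrite gtn_max /pc !gtn_max => dev /andP [/andP [ltC ltD] /andP [ltC' ltD']].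
have ltCmax : maxn (Ci p i) (Ci p' i) < k by rewrite gtn_max ltC.
rewrite /mk /ak /bk; congr (_ + _); apply: eq_card => j; rewrite !inE.
  rewrite !eqn_leq ![Ci _ j <= k]leqNgt.
  by rewrite (Ci_dev_threshold j dev ltCmax) (Ci_dev_threshold j dev (leqW ltCmax)).
case: (eqVneq j i) => [->|/dev eq_pj]; last by rewrite /Di eq_pj.
by rewrite (ltn_eqF ltD) (ltn_eqF ltD').
Qed.

(* At the old cost level c of i, the deviating player i leaves level c and
   no other player enters it. *)
Lemma mk_dev_at_cost p' p i :
  deviates p' p i -> pc p' i < pc p i -> mk p' (pc p i) < mk p (pc p i).
Proof.
set c := pc p i => dev lt_c'_c.
have lt_Ci'_c : Ci p' i < c := leq_ltn_trans (leq_maxl _ _) lt_c'_c.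
have lt_Di'_c : Di p' i < c := leq_ltn_trans (leq_maxr _ _) lt_c'_c.
set A := [set j | Ci p j == c]; set B := [set j | Di p j == c].
have sub_A : [set j | Ci p' j == c] \subset A :\ i.
  apply/subsetP => j; rewrite !inE => /eqP eq_Cj.
  have ji : j != i by apply: contraTneq lt_Ci'_c => eq_ji; rewrite -eq_ji eq_Cj ltnn.
  rewrite ji eqn_leq (Ci_dev_above dev) ?eq_Cj // andbT leqNgt.
  apply/negP => lt_c_Cj.
  have := Ci_dev_above (deviates_sym dev) (leq_ltn_trans (leq_maxl _ _) lt_c_Cj)
           (leqnn _).
  by rewrite eq_Cj leqNgt lt_c_Cj.
have sub_B : [set j | Di p' j == c] \subset B :\ i.
  apply/subsetP => j; rewrite !inE => /eqP eq_Dj.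
  have ji : j != i by apply: contraTneq lt_Di'_c => eq_ji; rewrite -eq_ji eq_Dj ltnn.
  by rewrite ji /= -/(Di p j) -eq_Dj /Di (dev j ji).
have i_AB : (i \in A) || (i \in B).
  by rewrite /A /B !inE /c /pc; case: leqP => _; rewrite eqxx ?orbT.
apply: (@leq_ltn_trans (#|A :\ i| + #|B :\ i|)).
  by apply: leq_add; apply: subset_leq_card.
rewrite /mk /ak /bk -/A -/B [#|A|](cardsD1 i) [#|B|](cardsD1 i) addnACA.
by rewrite -[X in X < _]add0n ltn_add2r addn_gt0 !lt0b.
Qed.

Lemma pc_le_rbound (P : 'I_N -> seq (seq V)) p i :
  p i \in P i -> pc p i <= rbound P.
Proof.
move=> pPi; rewrite /pc /rbound geq_max; apply/andP; split.
  apply: leq_trans (leq_maxl _ _); apply/bigmax_leqP_seq => e _ _.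
  by rewrite /Ce (leq_trans (max_card _)) ?card_ord.
apply: leq_trans (leq_maxr _ _).
apply: leq_trans (leq_bigmax (F := fun j => \max_(s <- P j) plen s) i).
exact: (leq_bigmax_seq (F := @plen V) _ pPi).
Qed.

End Deviation.

Theorem mainTheorem1 (V : finType) (adj : rel V) (N : nat)
    (u v : 'I_N -> V) (P : 'I_N -> seq (seq V)) (p : routing V N)
    (i : 'I_N) (q : seq V) :
  simple_graph adj ->
  0 < N ->
  (forall j, P j != [::]) ->
  (forall j s, s \in P j -> is_path adj (u j) (v j) s) ->
  (forall j, p j \in P j) ->
  q \in P i ->
  pc (replace p i q) i < pc p i ->
  routing_lt P (replace p i q) p.
Proof.
move=> _ _ _ _ pP _ greedy.
have dev : deviates (replace p i q) p i := replace_deviates p q.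
exists (pc p i); split.
- by rewrite (leq_ltn_trans (leq0n _) greedy) pc_le_rbound.
- move=> k /andP [lt_c_k _]; apply: (mk_dev_above dev).
  by rewrite gtn_max lt_c_k (ltn_trans greedy).
- exact: mk_dev_at_cost.
Qed.
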